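(* For every integer $m\geq 3$ there exists a connected cubic graph $G$ of order $2n$ such that every edge of $G$ is contained in at least one $[n-1]$-matching of $G$ (so $\chi'_{[n-1]}(G)$ is finite) and $\chi'_{[n-1]}(G)\geq m$.
   Context: All graphs are finite, simple (no loops, no parallel edges), connected and cubic (3-regular). For a positive integer $k$, a $[k]$-matching of $G$ is a matching of $G$ with exactly $k$ edges. The excessive $[k]$-index $\chi'_{[k]}(G)$ is the minimum number of $[k]$-matchings of $G$ whose union is $E(G)$; if some edge of $G$ lies in no $[k]$-matching, one sets $\chi'_{[k]}(G)=\infty$. *)

(* A simple graph on a finite vertex type T is a symmetric,
   irreflexive relation e : rel T. Edges are 2-element vertex sets {x,y}. *)
From mathcomp Require Import all_boot.
Set Implicit Arguments.
Unset Strict Implicit.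
Unset Printing Implicit Defensive.

Section Graphs.
Variable T : finType.
Variable e : rel T.

Definition simple_graph : Prop := symmetric e /\ irreflexive e.

Definition edges : {set {set T}} :=
  [set s : {set T} | [exists x : T, exists y : T, e x y && (s == [set x; y])]].

Definition cubic : Prop := forall x : T, #|[set y | e x y]| = 3.

Definition connected_graph : Prop := forall x y : T, connect e x y.

Definition matching (M : {set {set T}}) : Prop :=
  M \subset edges /\ trivIset M.

Definition kmatching (k : nat) (M : {set {set T}}) : Prop :=
  matching M /\ #|M| = k.

(* every edge lies in some [k]-matching (i.e. chi'_[k](G) is finite) *)
Definition every_edge_in_kmatching (k : nat) : Prop :=
  forall s, s \in edges -> exists M, kmatching k M /\ s \in M.

(* chi'_[k](G) >= m : every family of [k]-matchings whose union is E(G)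
   has at least m members *)
Definition excessive_index_ge (k m : nat) : Prop :=
  forall F : {set {set {set T}}},
    (forall M, M \in F -> kmatching k M) ->
    \bigcup_(M in F) M = edges ->
    m <= #|F|.
End Graphs.

From HB Require Import structures.
From mathcomp Require Import all_boot zify.
Set Implicit Arguments.
Unset Strict Implicit.
Unset Printing Implicit Defensive.

(* For m >= 3 we build the "necklace" of m gadgets: each gadget is K4 on
   Va Vb Vc Vd with the edge Va Vb subdivided by a vertex Mid, plus a
   pendant edge from Mid to a hub; the m hubs form a cycle.  The graph is
   cubic and connected with 6m = 2n vertices, n = 3m.

   Upper side: an [n-1]-matching is the same as a matching missing exactly
   two vertices.  Such matchings are encoded by edge involutions with two
   fixed points (section Matchings), built from gadget-local matchings;
   every edge is a 2-cycle of one of them.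

   Lower side: a matching containing a spoke edge Mid-Va or Mid-Vb misses a
   vertex of that gadget, because the three vertices beyond the spoke form an
   odd set closed up to the spoke (odd_set_uncovered).  So each
   [n-1]-matching uses spokes in at most two gadgets, while each gadget needs
   two distinct matchings for its two spokes; double counting gives
   chi'_[n-1] >= m. *)

Section Matchings.
Variables (T : finType) (e : rel T).
Hypotheses (e_sym : symmetric e) (e_irr : irreflexive e).

(* An edge involution is an involution of the vertices that moves every
   non-fixed vertex to a neighbour; its 2-cycles form a matching. *)
Definition edge_involution (f : T -> T) : Prop :=
  involutive f /\ forall x, f x != x -> e x (f x).

Definition fixpoints (f : T -> T) : {set T} := [set x | f x == x].

Definition inv_matching (f : T -> T) : {set {set T}} :=
  [set [set x; f x] | x in ~: fixpoints f].

Definition pair_up (a b : T) (f : T -> T) (x : T) : T :=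
  if x == a then b else if x == b then a else f x.

Lemma edge_involution_id : edge_involution id.
Proof. by split=> // x; rewrite eqxx. Qed.

Lemma edge_involution_pair_up a b f :
  edge_involution f -> f a = a -> f b = b -> e a b ->
  edge_involution (pair_up a b f).
Proof.
move=> [fK f_edge] fa fb eab.
have ab : a != b by apply: contraTneq eab => ->; rewrite e_irr.
split=> [x|x]; rewrite /pair_up.
- have [-> | xa] := eqVneq x a; first by rewrite eq_sym (negbTE ab) eqxx.
  have [-> | xb] := eqVneq x b; first by rewrite eqxx.
  have fxa : f x != a by apply: contra xa => /eqP fx; rewrite -[x]fK fx fa.
  have fxb : f x != b by apply: contra xb => /eqP fx; rewrite -[x]fK fx fb.
  by rewrite (negbTE fxa) (negbTE fxb) fK.
- have [-> _ | _] := eqVneq x a; first exact: eab.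
  have [-> _ | _] := eqVneq x b; first by rewrite e_sym.
  exact: f_edge.
Qed.

Lemma fixpoints_pair_up a b f :
  a != b -> fixpoints (pair_up a b f) = fixpoints f :\: [set a; b].
Proof.
move=> ab; apply/setP => x; rewrite !inE /pair_up.
have [-> | xa] := eqVneq x a; first by rewrite eq_sym (negbTE ab).
by have [-> | xb] := eqVneq x b; rewrite ?(negbTE ab).
Qed.

Lemma card_fixpoints_pair_up a b f :
  a != b -> f a = a -> f b = b ->
  #|fixpoints (pair_up a b f)| = #|fixpoints f| - 2.
Proof.
move=> ab fa fb; rewrite fixpoints_pair_up // cardsD.
have /setIidPr -> : [set a; b] \subset fixpoints f.
  by apply/subsetP => x; rewrite !inE => /orP[] /eqP ->; rewrite ?fa ?fb.
by rewrite cards2 ab.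
Qed.

Lemma mem_inv_matching f x : f x != x -> [set x; f x] \in inv_matching f.
Proof. by move=> fx; apply: imset_f; rewrite !inE. Qed.

Lemma edge_mem B x :
  B \in edges e -> x \in B -> exists2 y, e x y & B = [set x; y].
Proof.
rewrite inE => /existsP[u /existsP[v /andP[euv /eqP ->]]].
by rewrite !inE => /orP[] /eqP ->; [exists v | exists u; rewrite 1?e_sym 1?setUC].
Qed.

Lemma card_edge B : B \in edges e -> #|B| = 2.
Proof.
rewrite inE => /existsP[u /existsP[v /andP[euv /eqP ->]]].
by rewrite cards2; case: eqP euv => [-> | //]; rewrite e_irr.
Qed.

Lemma matching_edge_unique M B1 B2 x :
  matching e M -> B1 \in M -> B2 \in M -> x \in B1 -> x \in B2 -> B1 = B2.
Proof.
move=> [_ /trivIsetP triv] B1M B2M xB1 xB2; apply/eqP; apply: contraT => B12.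
by have := disjointFr (triv _ _ B1M B2M B12) xB1; rewrite xB2.
Qed.

Lemma card_cover_matching M : matching e M -> #|cover M| = (#|M|).*2.
Proof.
move=> [Medges /eqP <-]; rewrite -muln2 -sum_nat_const.
by apply: eq_bigr => B BM; apply: card_edge; apply: (subsetP Medges).
Qed.

Lemma matching_inv_matching f : edge_involution f -> matching e (inv_matching f).
Proof.
move=> [fK f_edge]; split.
  apply/subsetP => B /imsetP[x]; rewrite !inE => fx ->.
  by apply/existsP; exists x; apply/existsP; exists (f x); rewrite eqxx f_edge.
have same_pair z x : z \in [set x; f x] -> [set x; f x] = [set z; f z].
  by rewrite !inE => /orP[] /eqP ->; rewrite ?fK 1?setUC.
apply/trivIsetP => B1 B2 /imsetP[x _ ->] /imsetP[y _ ->] xy.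
rewrite -setI_eq0; apply/set0Pn => -[z]; rewrite inE => /andP[zx zy].
by move: xy; rewrite (same_pair _ _ zx) (same_pair _ _ zy) eqxx.
Qed.

Lemma cover_inv_matching f : involutive f -> cover (inv_matching f) = ~: fixpoints f.
Proof.
move=> fK; apply/setP => z; rewrite !inE; apply/bigcupP/idP => [[B /imsetP[x]] | fz].
  by rewrite !inE => fx ->; rewrite !inE => /orP[] /eqP ->; rewrite ?fK // eq_sym.
by exists [set z; f z]; [apply: mem_inv_matching | rewrite !inE eqxx].
Qed.

Lemma card_inv_matching f :
  edge_involution f -> #|T| = (#|inv_matching f|).*2 + #|fixpoints f|.
Proof.
move=> fE; rewrite -(card_cover_matching (matching_inv_matching fE)).
by rewrite cover_inv_matching; [rewrite addnC cardsC | exact: fE.1].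
Qed.

Lemma every_edge_in_near_perfect n :
  #|T| = (2 * n)%N ->
  (forall x y, e x y ->
     exists f, [/\ edge_involution f, #|fixpoints f| = 2 & f x = y]) ->
  every_edge_in_kmatching e n.-1.
Proof.
move=> cardT near s; rewrite inE => /existsP[x /existsP[y /andP[exy /eqP ->]]].
have [f [fE fix2 fxy]] := near x y exy.
exists (inv_matching f); split; last first.
  by rewrite -fxy mem_inv_matching // fxy; apply: contraTneq exy => ->; rewrite e_irr.
split; first exact: matching_inv_matching.
by move: (card_inv_matching fE); rewrite cardT fix2; lia.
Qed.

Lemma card_uncovered n M :
  0 < n -> #|T| = (2 * n)%N -> kmatching e n.-1 M -> #|~: cover M| = 2.
Proof.
move=> n_gt0 cardT [Mmatch cardM]; have := cardsC (cover M).
by rewrite card_cover_matching // cardM cardT; lia.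
Qed.

(* Parity obstruction: if an odd vertex set X, avoiding an edge E0 of M, has
   all its neighbours in X or E0, then M cannot cover X, since the M-edges
   at vertices of X would partition X into pairs. *)
Lemma odd_set_uncovered M E0 (X : {set T}) :
  matching e M -> E0 \in M -> [disjoint X & E0] ->
  (forall x y, x \in X -> e x y -> y \in X :|: E0) ->
  odd #|X| -> ~~ (X \subset cover M).
Proof.
move=> Mmatch E0M XE0 X_closed X_odd; apply/negP => Xcov.
pose P := [set B in M | B \subset X].
have P_match : matching e P.
  have PM : P \subset M by apply/subsetP => B; rewrite inE => /andP[].
  by split; [apply: subset_trans Mmatch.1 | apply: trivIsetS Mmatch.2].
have coverP : cover P = X.
  apply/eqP; rewrite eqEsubset; apply/andP; split.
    by apply/bigcupsP => B; rewrite inE => /andP[].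
  apply/subsetP => x xX; have /bigcupP[B BM xB] := subsetP Xcov x xX.
  have [y exy defB] := edge_mem (subsetP Mmatch.1 B BM) xB.
  apply/bigcupP; exists B => //; rewrite inE BM defB subUset sub1set xX sub1set /=.
  have := X_closed x y xX exy; rewrite inE => /orP[// | yE0].
  have BE0 : B = E0.
    by apply: (matching_edge_unique Mmatch BM E0M _ yE0); rewrite defB !inE eqxx orbT.
  by move: XE0; rewrite -BE0 => /disjointFr/(_ xX); rewrite xB.
by move: X_odd; rewrite -coverP card_cover_matching // odd_double.
Qed.

End Matchings.

Lemma card_sum_indicator (T : finType) (A : {pred T}) : #|A| = \sum_(x : T) (x \in A).
Proof. by rewrite -sum1_card big_mkcond; apply: eq_bigr => x _; case: (x \in A). Qed.

Lemma double_count (I J : finType) (F : {set J}) (S : J -> {set I}) a b :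
  (forall i, a <= #|[set j in F | i \in S j]|) ->
  (forall j, j \in F -> #|S j| <= b) ->
  #|I| * a <= #|F| * b.
Proof.
move=> lo hi; rewrite -!sum_nat_const.
apply: (@leq_trans (\sum_(i : I) #|[set j in F | i \in S j]|)); first exact: leq_sum.
have -> : \sum_(i : I) #|[set j in F | i \in S j]| = \sum_(j in F) #|S j|.
  under eq_bigr do rewrite card_sum_indicator.
  rewrite exchange_big [RHS]big_mkcond; apply: eq_bigr => j _.
  case: ifP => jF; last by rewrite big1 // => i _; rewrite inE jF.
  by rewrite card_sum_indicator; apply: eq_bigr => i _; rewrite inE jF.
exact: leq_sum.
Qed.

(* The gadget: the complete graph on Va, Vb, Vc, Vd with the edge Va Vb
   subdivided by Mid, plus a pendant edge Mid Hub. *)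
Inductive gvertex : Type := Hub | Mid | Va | Vb | Vc | Vd.

Definition gvertex_enum : seq gvertex := [:: Hub; Mid; Va; Vb; Vc; Vd].

Definition gvertex_code (v : gvertex) : nat :=
  match v with Hub => 0 | Mid => 1 | Va => 2 | Vb => 3 | Vc => 4 | Vd => 5 end.

Lemma gvertex_codeK : pcancel gvertex_code (nth None (map Some gvertex_enum)).
Proof. by case. Qed.

HB.instance Definition _ := Countable.copy gvertex (pcan_type gvertex_codeK).

Lemma gvertex_enumP : Finite.axiom gvertex_enum. Proof. by case. Qed.

HB.instance Definition _ := isFinite.Build gvertex gvertex_enumP.

Lemma card_gvertex (A : {pred gvertex}) : #|A| = count (mem A) gvertex_enum.
Proof. by rewrite cardE /enum_mem -enumT enumT unlock size_filter. Qed.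

Definition gadget (p q : gvertex) : bool :=
  match p, q with
  | Hub, Mid | Mid, Hub | Mid, Va | Va, Mid | Mid, Vb | Vb, Mid
  | Va, Vc | Vc, Va | Va, Vd | Vd, Va | Vb, Vc | Vc, Vb
  | Vb, Vd | Vd, Vb | Vc, Vd | Vd, Vc => true
  | _, _ => false
  end.

Lemma gadget_sym : symmetric gadget. Proof. by do 2 case. Qed.

Lemma gadget_irr : irreflexive gadget. Proof. by case. Qed.

Lemma gadget_degree p : p != Hub -> #|[set q | gadget p q]| = 3.
Proof. by rewrite cardsE card_gvertex; case: p. Qed.

Lemma gadget_connected p : connect gadget p Hub.
Proof.
apply/connectP; case: p.
- by exists [::].
- by exists [:: Hub].
- by exists [:: Mid; Hub].
- by exists [:: Mid; Hub].
- by exists [:: Va; Mid; Hub].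
- by exists [:: Va; Mid; Hub].
Qed.

Definition two_pairs (a b c d : gvertex) : gvertex -> gvertex :=
  pair_up a b (pair_up c d id).

Lemma two_pairs_spec a b c d :
  gadget a b -> gadget c d -> [&& a != c, a != d, b != c & b != d] ->
  edge_involution gadget (two_pairs a b c d) /\
  #|fixpoints (two_pairs a b c d)| = 2.
Proof.
move=> ab cd /and4P[ac ad bc bd].
have c_d : c != d by apply: contraTneq cd => ->; rewrite gadget_irr.
have cd_a : pair_up c d id a = a by rewrite /pair_up (negbTE ac) (negbTE ad).
have cd_b : pair_up c d id b = b by rewrite /pair_up (negbTE bc) (negbTE bd).
have a_b : a != b by apply: contraTneq ab => ->; rewrite gadget_irr.
split.
  apply: (edge_involution_pair_up gadget_sym gadget_irr) => //.
  exact: (edge_involution_pair_up gadget_sym gadget_irr (edge_involution_id _)).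
rewrite card_fixpoints_pair_up // card_fixpoints_pair_up //.
have -> : fixpoints id = [set: gvertex] by apply/setP => x; rewrite !inE eqxx.
by rewrite cardsT card_gvertex.
Qed.

Definition gadget_perfect : gvertex -> gvertex := pair_up Hub Mid (two_pairs Va Vc Vb Vd).

Lemma gadget_perfect_spec :
  edge_involution gadget gadget_perfect /\ #|fixpoints gadget_perfect| = 0.
Proof.
have [inv fix2] := @two_pairs_spec Va Vc Vb Vd erefl erefl erefl.
split; first exact: (edge_involution_pair_up gadget_sym gadget_irr inv).
by rewrite card_fixpoints_pair_up // fix2.
Qed.

Definition gadget_hub_free : gvertex -> gvertex := two_pairs Mid Va Vb Vd.

Lemma gadget_hub_free_spec :
  edge_involution gadget gadget_hub_free /\
  fixpoints gadget_hub_free = [set Hub; Vc].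
Proof.
split; first exact: (@two_pairs_spec Mid Va Vb Vd erefl erefl erefl).1.
by apply/setP; case; rewrite !inE.
Qed.

Definition opposite_edge (p q : gvertex) : gvertex * gvertex :=
  match p, q with
  | Hub, _ | _, Hub => (Va, Vc)
  | Mid, Va | Va, Mid => (Vb, Vd)
  | Mid, _ | _, Mid => (Va, Vd)
  | _, _ => (Hub, Mid)
  end.

Lemma gadget_edge_cover p q : gadget p q ->
  exists L, [/\ edge_involution gadget L, #|fixpoints L| = 2 & L p = q].
Proof.
move=> pq; case def_cd : (opposite_edge p q) => [c d].
have [cd disj] : gadget c d /\ [&& p != c, p != d, q != c & q != d].
  by move: pq def_cd; case: p; case: q => // _ [<- <-].
have [inv fix2] := two_pairs_spec pq cd disj.
by exists (two_pairs p q c d); split; rewrite // /two_pairs /pair_up eqxx.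
Qed.

Section Necklace.
Variable K : nat.
Hypothesis K_gt2 : 2 < K.

Definition vertex := ('I_K * gvertex)%type.

Definition cycle_adj (i j : 'I_K) : bool := (j == ordS i) || (i == ordS j).

Definition necklace : rel vertex := fun x y =>
  ((x.1 == y.1) && gadget x.2 y.2) || [&& x.2 == Hub, y.2 == Hub & cycle_adj x.1 y.1].

Lemma val_ordS (i : 'I_K) : nat_of_ord (ordS i) = if i.+1 == K then 0 else i.+1.
Proof.
rewrite /=; case: eqP => [-> | SiK]; first exact: modnn.
by apply: modn_small; have := ltn_ord i; lia.
Qed.

Lemma ordS_neq (i : 'I_K) : ordS i != i.
Proof. by apply/eqP => /(congr1 (@nat_of_ord _)); rewrite val_ordS; case: eqP; lia. Qed.

(* On a cycle of length at least 3, the two neighbours of i are distinct. *)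
Lemma ordSS_neq (i : 'I_K) : ordS (ordS i) != i.
Proof.
apply/eqP => /(congr1 (@nat_of_ord _)); rewrite !val_ordS.
by case: (i.+1 =P K) => [| _] /=; case: eqP; lia.
Qed.

Lemma necklace_sym : symmetric necklace.
Proof.
move=> [i p] [j q]; rewrite /necklace /cycle_adj /= [j == i]eq_sym gadget_sym.
by rewrite andbA [(p == Hub) && _]andbC -andbA [(j == ordS i) || _]orbC.
Qed.

Lemma necklace_irr : irreflexive necklace.
Proof.
move=> [i p]; rewrite /necklace /cycle_adj /= gadget_irr [i == ordS i]eq_sym.
by rewrite (negbTE (ordS_neq i)) !andbF.
Qed.

Lemma necklace_local i p q : necklace (i, p) (i, q) = gadget p q.
Proof.
rewrite /necklace /cycle_adj /= eqxx [i == ordS i]eq_sym.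
by rewrite (negbTE (ordS_neq i)) !andbF orbF.
Qed.

Lemma necklace_off_hub i p y :
  p != Hub -> necklace (i, p) y = (y.1 == i) && gadget p y.2.
Proof. by move=> pH; rewrite /necklace /= (negbTE pH) orbF eq_sym. Qed.

(* Each hub sees the Mid vertex of its gadget and the two neighbouring hubs;
   every other vertex has its three neighbours inside its own gadget. *)
Lemma necklace_cubic : cubic necklace.
Proof.
move=> [i p]; have [-> | pH] := eqVneq p Hub; last first.
  have -> : [set y | necklace (i, p) y] = pair i @: [set q | gadget p q].
    apply/setP => -[j q]; rewrite inE necklace_off_hub //=.
    apply/andP/imsetP => [[/eqP -> pq] | [r]]; first by exists q; rewrite ?inE.
    by rewrite inE => pr [-> ->].
  by rewrite card_imset ?gadget_degree // => q1 q2 [].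
have -> : [set y | necklace (i, Hub) y] = [set (i, Mid); (ordS i, Hub); (ord_pred i, Hub)].
  apply/setP => -[j q]; rewrite !inE /necklace /cycle_adj /= !xpair_eqE.
  have -> : (i == ordS j) = (j == ord_pred i).
    by rewrite -(inj_eq (@ord_pred_inj _)) ordSK eq_sym.
  by case: q; rewrite /= ?andbF ?andbT ?orbF // eq_sym.
rewrite -setUA cardsU1 cards2 !inE !xpair_eqE /= !andbF /= andbT.
suff -> : (ordS i == ord_pred i) = false by [].
apply/negbTE; apply: contra (ordSS_neq i) => /eqP ->; by rewrite ord_predK.
Qed.

Lemma connect_in_gadget i p q : connect gadget p q -> connect necklace (i, p) (i, q).
Proof.
move=> /connectP[s ps ->]; apply/connectP; exists (map (pair i) s); last by rewrite last_map.
by apply: homo_path ps => p1 q1; rewrite necklace_local.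
Qed.

Let i0 : 'I_K := Ordinal (leq_trans (isT : 0 < 3) K_gt2).

Lemma hubs_connected (j : 'I_K) : connect necklace (i0, Hub) (j, Hub).
Proof.
case: j => n; elim: n => [n_lt | n IHn Sn_lt].
  by have -> : Ordinal n_lt = i0 by apply: val_inj.
have n_lt : n < K by apply: ltnW.
apply: connect_trans (IHn n_lt) (connect1 _).
have -> : Ordinal Sn_lt = ordS (Ordinal n_lt).
  by apply: val_inj; rewrite /= modn_small.
by rewrite /necklace /cycle_adj /= !eqxx /= orbT.
Qed.

Lemma necklace_connected : connected_graph necklace.
Proof.
have to_i0 x : connect necklace x (i0, Hub).
  case: x => i p; apply: connect_trans (connect_in_gadget i (gadget_connected p)) _.
  by rewrite (sym_connect_sym necklace_sym); apply: hubs_connected.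
move=> x y; apply: connect_trans (to_i0 x) _.
by rewrite (sym_connect_sym necklace_sym); apply: to_i0.
Qed.

Lemma card_vertex : #|{: vertex}| = (2 * (3 * K))%N.
Proof. by rewrite card_prod card_ord card_gvertex /= mulnA mulnC. Qed.

Definition lift (L : 'I_K -> gvertex -> gvertex) (x : vertex) : vertex := (x.1, L x.1 x.2).

Lemma edge_involution_lift L :
  (forall i, edge_involution gadget (L i)) -> edge_involution necklace (lift L).
Proof.
move=> LE; split=> [[i p] | [i p]]; rewrite /lift /=; first by rewrite (LE i).1.
by rewrite xpair_eqE eqxx necklace_local => /(LE i).2.
Qed.

Lemma card_fixpoints_lift L : #|fixpoints (lift L)| = \sum_i #|fixpoints (L i)|.
Proof.
rewrite card_sum_indicator.
rewrite (eq_bigr (fun x => nat_of_bool (x.2 \in fixpoints (L x.1)))); last first.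
  by move=> [i p] _; rewrite !inE xpair_eqE eqxx.
by rewrite -(pair_bigA _ (fun i p => nat_of_bool (p \in fixpoints (L i))));
  apply: eq_bigr => i _; rewrite card_sum_indicator.
Qed.

Definition gadget_near_perfect (i : 'I_K) (L0 : gvertex -> gvertex) : vertex -> vertex :=
  lift (fun j => if j == i then L0 else gadget_perfect).

Lemma gadget_near_perfect_spec i L0 :
  edge_involution gadget L0 -> #|fixpoints L0| = 2 ->
  edge_involution necklace (gadget_near_perfect i L0) /\
  #|fixpoints (gadget_near_perfect i L0)| = 2.
Proof.
move=> L0E L0fix; split.
  apply: edge_involution_lift => j.
  by case: eqP => _; [exact: L0E | exact: gadget_perfect_spec.1].
rewrite card_fixpoints_lift (bigD1 i) //= eqxx L0fix big1 // => j /negbTE ->.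
exact: gadget_perfect_spec.2.
Qed.

Definition hub_near_perfect (i : 'I_K) : vertex -> vertex :=
  pair_up (i, Hub) (ordS i, Hub)
    (lift (fun j => if (j == i) || (j == ordS i) then gadget_hub_free else gadget_perfect)).

Lemma hub_near_perfect_spec i :
  edge_involution necklace (hub_near_perfect i) /\
  #|fixpoints (hub_near_perfect i)| = 2.
Proof.
have [freeE freeFix] := gadget_hub_free_spec.
have Si_i := ordS_neq i.
pose L j := if (j == i) || (j == ordS i) then gadget_hub_free else gadget_perfect.
have LE j : edge_involution gadget (L j).
  by rewrite /L; case: ifP => _; [exact: freeE | exact: gadget_perfect_spec.1].
have Li : lift L (i, Hub) = (i, Hub) by rewrite /lift /L /= eqxx.
have LSi : lift L (ordS i, Hub) = (ordS i, Hub) by rewrite /lift /L /= eqxx orbT.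
have hubs_adj : necklace (i, Hub) (ordS i, Hub).
  by rewrite /necklace /cycle_adj /= !eqxx orbT.
have iSi : (i, Hub) != (ordS i, Hub) by rewrite xpair_eqE eq_sym (negbTE Si_i).
split.
  rewrite /hub_near_perfect -/L.
  apply: (edge_involution_pair_up necklace_sym necklace_irr) => //.
  exact: edge_involution_lift.
rewrite card_fixpoints_pair_up // card_fixpoints_lift (bigD1 i) //= (bigD1 (ordS i)) //=.
rewrite /L !eqxx orbT /= freeFix cards2 big1 // => j /andP[ji jSi].
by rewrite (negbTE ji) (negbTE jSi); exact: gadget_perfect_spec.2.
Qed.

Lemma necklace_edge_cover x y : necklace x y ->
  exists f, [/\ edge_involution necklace f, #|fixpoints f| = 2 & f x = y].
Proof.
case: x y => [i p] [j q]; rewrite /necklace /cycle_adj /=.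
case/orP => [/andP[/eqP <- pq] | /and3P[/eqP -> /eqP -> /orP[] /eqP ->]].
- have [L0 [L0E L0fix L0p]] := gadget_edge_cover pq.
  have [fE ffix] := gadget_near_perfect_spec i L0E L0fix.
  exists (gadget_near_perfect i L0); split=> //.
  by rewrite /gadget_near_perfect /lift /= eqxx L0p.
- have [fE ffix] := hub_near_perfect_spec i.
  by exists (hub_near_perfect i); split; rewrite // /hub_near_perfect /pair_up eqxx.
- have [fE ffix] := hub_near_perfect_spec j.
  exists (hub_near_perfect j); split; rewrite // /hub_near_perfect /pair_up eqxx.
  by rewrite xpair_eqE (negbTE (ordS_neq j)).
Qed.

Definition spoke (i : 'I_K) (a : gvertex) : {set vertex} := [set (i, Mid); (i, a)].

Lemma spoke_edge i a : gadget Mid a -> spoke i a \in edges necklace.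
Proof.
move=> Ma; rewrite inE; apply/existsP; exists (i, Mid); apply/existsP; exists (i, a).
by rewrite necklace_local Ma eqxx.
Qed.

Definition far_side (a : gvertex) : {set gvertex} := [set q | q \notin [:: Hub; Mid; a]].

Lemma far_side_spec a : a \in [:: Va; Vb] ->
  #|far_side a| = 3 /\
  forall p q, p \in far_side a -> gadget p q -> q \in far_side a :|: [set Mid; a].
Proof.
by rewrite !inE => /orP[] /eqP ->; split; rewrite ?cardsE ?card_gvertex //;
  do 2 case; rewrite !inE.
Qed.

(* A matching containing a spoke edge misses a vertex of that gadget, by
   the parity obstruction applied to the far side. *)
Lemma spoke_uncovered M i a : matching necklace M -> a \in [:: Va; Vb] ->
  spoke i a \in M -> exists p, (i, p) \notin cover M.
Proof.
move=> Mmatch a_spoke spokeM; have [far_odd far_closed] := far_side_spec a_spoke.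
have far_hub : Hub \notin far_side a by rewrite inE.
have: ~~ (pair i @: far_side a \subset cover M).
  apply: (odd_set_uncovered necklace_sym necklace_irr Mmatch spokeM).
  - rewrite disjoints_subset; apply/subsetP => _ /imsetP[q qfar ->].
    rewrite !inE !xpair_eqE eqxx /=.
    by move: qfar; rewrite !inE; apply: contra => /orP[] ->; rewrite ?orbT.
  - move=> _ [j q] /imsetP[p pfar ->]; rewrite necklace_off_hub; last first.
      by apply: contraNneq far_hub => <-.
    move=> /= /andP[/eqP -> pq]; move: (far_closed p q pfar pq).
    rewrite !in_setU => /orP[qfar | qspoke]; first by rewrite imset_f.
    by move: qspoke; rewrite !inE !xpair_eqE eqxx /= => ->; rewrite orbT.
  - by rewrite card_imset ?far_odd // => q1 q2 [].
by case/subsetPn => _ /imsetP[p _ ->]; exists p.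
Qed.

Definition split_gadgets (M : {set {set vertex}}) : {set 'I_K} :=
  [set i | (spoke i Va \in M) || (spoke i Vb \in M)].

(* A [3K-1]-matching misses two vertices, hence splits at most two gadgets. *)
Lemma card_split_gadgets M : kmatching necklace (3 * K).-1 M -> #|split_gadgets M| <= 2.
Proof.
move=> Mk; have K_gt0 : 0 < 3 * K by lia.
rewrite -(card_uncovered necklace_irr K_gt0 card_vertex Mk).
apply: leq_trans (leq_imset_card fst _); apply: subset_leq_card.
apply/subsetP => i; rewrite inE => split_i.
have [a a_spoke spokeM] : exists2 a, a \in [:: Va; Vb] & spoke i a \in M.
  by case/orP: split_i; [exists Va | exists Vb].
have [p pM] := spoke_uncovered Mk.1 a_spoke spokeM.
by apply/imsetP; exists (i, p); rewrite ?inE.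
Qed.

(* Each gadget is split by at least two matchings of a covering family, as
   its two spoke edges share the vertex Mid; double counting then gives the
   bound. *)
Lemma necklace_lower_bound (F : {set {set {set vertex}}}) :
  (forall M, M \in F -> kmatching necklace (3 * K).-1 M) ->
  \bigcup_(M in F) M = edges necklace -> K <= #|F|.
Proof.
move=> Fk Fcover.
have in_family (E : {set vertex}) :
    E \in edges necklace -> exists2 M, M \in F & E \in M.
  by rewrite -Fcover => /bigcupP[M MF EM]; exists M.
have split_twice i : 2 <= #|[set M in F | i \in split_gadgets M]|.
  have [M1 M1F aM1] := in_family _ (@spoke_edge i Va isT).
  have [M2 M2F bM2] := in_family _ (@spoke_edge i Vb isT).
  have M12 : M1 != M2.
    apply/eqP => M12; rewrite -M12 in bM2.
    have := matching_edge_unique (Fk M1 M1F).1 aM1 bM2 (x := (i, Mid)).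
    rewrite !inE eqxx => /(_ isT isT)/setP/(_ (i, Va)).
    by rewrite !inE !xpair_eqE eqxx.
  have <- : #|[set M1; M2]| = 2 by rewrite cards2 M12.
  apply: subset_leq_card; apply/subsetP => M.
  by rewrite !inE => /orP[] /eqP ->; rewrite ?M1F ?M2F ?aM1 ?bM2 ?orbT.
have := double_count split_twice (fun M MF => card_split_gadgets (Fk M MF)).
by rewrite card_ord leq_pmul2r.
Qed.

End Necklace.

Theorem proposition2 (m : nat) (hm : 3 <= m) :
  exists (T : finType) (e : rel T) (n : nat),
    simple_graph e /\ cubic e /\ connected_graph e /\ #|T| = (2 * n)%N /\
    every_edge_in_kmatching e n.-1 /\ excessive_index_ge e n.-1 m.
Proof.
exists (vertex m), (@necklace m), (3 * m)%N.
split; first exact: (conj (@necklace_sym m) (necklace_irr hm)).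
split; first exact: necklace_cubic.
split; first exact: necklace_connected.
split; first exact: card_vertex.
split; last exact: necklace_lower_bound.
apply: (every_edge_in_near_perfect (necklace_irr hm)).
  exact: card_vertex.
exact: necklace_edge_cover.
Qed.
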